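(* Let $d_1\ge1$, $d_2\ge2$, and for $y_1\in\mathbb{R}$ let $\Phi_{y_1}$ denote the solution map $(u_0,u_1)\mapsto(u(\cdot,y_1,\cdot),\partial_{y_1}u(\cdot,y_1,\cdot))$ of the Cauchy problem $\partial_{y_1}^2u=\Delta_xu-\Delta_{y'}u$, $u|_{y_1=0}=u_0$, $\partial_{y_1}u|_{y_1=0}=u_1$, given on the Fourier side (see context). Let $\Phi^S_{y_1}$ be its restriction to $X^S$ for $y_1\ge0$, $\Phi^U_{y_1}$ its restriction to $X^U$ for $y_1\le0$, and $\Phi^C_{y_1}$ its restriction to $X^C$. Then for all $u,v\in X^S$ and $y_1\ge0$, $$\|\Phi^S_{y_1}(u)-\Phi^S_{y_1}(v)\|_X^2\le\|u-v\|_X^2,$$ and for all $u,v\in X^U$ and $y_1\le0$, $$\|\Phi^U_{y_1}(u)-\Phi^U_{y_1}(v)\|_X^2\le\|u-v\|_X^2.$$ For $u\in X^C$, $\Phi^C_{y_1}=\Phi^S_{y_1}$ for $y_1\ge0$ and $\Phi^C_{y_1}=\Phi^U_{y_1}$ for $y_1\le0$, and equality holds in both estimates.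
   Context: Coordinates $(x,y_1,y')\in\mathbb{R}^{d_1}\times\mathbb{R}\times\mathbb{R}^{d_2-1}$; Fourier transform in $(x,y')$ with dual variables $(\xi,\eta')$. $\omega=\sqrt{|\xi|^2-|\eta'|^2}$ on $\{|\eta'|\le|\xi|\}$, $\lambda=\sqrt{|\eta'|^2-|\xi|^2}$ on $\{|\xi|\le|\eta'|\}$. The solution map acts on the Fourier side by the matrix $\begin{pmatrix}\cos(\omega y_1)&\sin(\omega y_1)/\omega\\-\omega\sin(\omega y_1)&\cos(\omega y_1)\end{pmatrix}$ on $\{|\eta'|\le|\xi|\}$ and $\begin{pmatrix}\cosh(\lambda y_1)&\sinh(\lambda y_1)/\lambda\\ \lambda\sinh(\lambda y_1)&\cosh(\lambda y_1)\end{pmatrix}$ on $\{|\xi|<|\eta'|\}$. The space $X$ consists of pairs $v=(v_0,v_1)$ with $\|v\|_X^2=\iint_{\{|\eta'|<|\xi|\}}\omega^2|\hat v_0|^2+\iint_{\{|\xi|\le|\eta'|\}}\lambda^2|\hat v_0|^2+\iint|\hat v_1|^2<\infty$. $X^S=\{v\in X:\hat v_0+\hat v_1/\lambda=0\text{ for }|\xi|<|\eta'|\}$, $X^U=\{v\in X:\hat v_0-\hat v_1/\lambda=0\text{ for }|\xi|<|\eta'|\}$, $X^C=\{v\in X:\mathrm{supp}(\hat v_0,\hat v_1)\subseteq\{|\xi|\ge|\eta'|\}\}=X^S\cap X^U$. *)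

From HB Require Import structures.
From mathcomp Require Import all_boot all_order all_algebra.
From mathcomp Require Import all_classical all_reals all_analysis.
From mathcomp Require Import complex.
Set Implicit Arguments. Unset Strict Implicit. Unset Printing Implicit Defensive.
Import Order.TTheory GRing.Theory Num.Theory.
Local Open Scope ring_scope.

Section Defs.
Variable R : realType.

(* Lebesgue integral of a [0,+oo]-valued function on R^n = n.-tuple R, written as
   the iterated one-dimensional Lebesgue integral (Tonelli). *)
Fixpoint intRn (n : nat) : (n.-tuple R -> \bar R) -> \bar R :=
  match n return (n.-tuple R -> \bar R) -> \bar R with
  | 0 => fun f => f [tuple]
  | n'.+1 => fun f =>
      (\int[@lebesgue_measure R]_(t in [set: R])
         intRn (fun v : n'.-tuple R => f [tuple of t :: v]))%E
  end.

Definition enorm (n : nat) (v : n.-tuple R) : R := Num.sqrt (\sum_(i < n) tnth v i ^+ 2).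

(* Frequency space: (xi, eta') in R^d1 x R^(d2-1) *)
Definition freq (d1 d2 : nat) := (d1.-tuple R * (d2.-1).-tuple R)%type.

Definition intF (d1 d2 : nat) (f : freq d1 d2 -> \bar R) : \bar R :=
  intRn (fun xi : d1.-tuple R => intRn (fun eta : (d2.-1).-tuple R => f (xi, eta))).

Definition nullF (d1 d2 : nat) (A : set (freq d1 d2)) : Prop :=
  intF (fun p => ((\1_A p : R))%:E) = 0%E.

(* omega = sqrt(|xi|^2 - |eta'|^2) (used on |eta'| <= |xi|),
   lambda = sqrt(|eta'|^2 - |xi|^2) (used on |xi| <= |eta'|) *)
Definition omega d1 d2 (p : freq d1 d2) : R :=
  Num.sqrt (enorm p.1 ^+ 2 - enorm p.2 ^+ 2).
Definition lambda d1 d2 (p : freq d1 d2) : R :=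
  Num.sqrt (enorm p.2 ^+ 2 - enorm p.1 ^+ 2).

(* sin(w y)/w and sinh(w y)/w, extended continuously by y at w = 0 *)
Definition sin_over (w y : R) : R := if w == 0 then y else sin (w * y) / w.
Definition sinh (x : R) : R := (expR x - expR (- x)) / 2.
Definition cosh (x : R) : R := (expR x + expR (- x)) / 2.
Definition sinh_over (w y : R) : R := if w == 0 then y else sinh (w * y) / w.

(* Elements of X, represented on the Fourier side: pairs (v0^, v1^) of
   complex-valued functions of (xi, eta'). *)
Definition pairF d1 d2 := (freq d1 d2 -> R[i] * R[i])%type.

Definition cabs2 (z : R[i]) : R := complex.Re z ^+ 2 + complex.Im z ^+ 2.

Definition rc (x : R) : R[i] := real_complex R x.

Definition Phi d1 d2 (y1 : R) (v : pairF d1 d2) : pairF d1 d2 :=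
  fun p =>
    let a0 := (v p).1 in let a1 := (v p).2 in
    if enorm p.2 <= enorm p.1 then
      let w := omega p in
      (rc (cos (w * y1)) * a0 + rc (sin_over w y1) * a1,
       rc (- w * sin (w * y1)) * a0 + rc (cos (w * y1)) * a1)
    else
      let l := lambda p in
      (rc (cosh (l * y1)) * a0 + rc (sinh_over l y1) * a1,
       rc (l * sinh (l * y1)) * a0 + rc (cosh (l * y1)) * a1).

Definition subF d1 d2 (u v : pairF d1 d2) : pairF d1 d2 :=
  fun p => ((u p).1 - (v p).1, (u p).2 - (v p).2).

Definition Xnorm2 d1 d2 (v : pairF d1 d2) : \bar R :=
  (intF (fun p => if (enorm p.2 < enorm p.1)%R
                  then (omega p ^+ 2 * cabs2 (v p).1)%R%:E else 0%E)
 + intF (fun p => if (enorm p.1 <= enorm p.2)%R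
                  then (lambda p ^+ 2 * cabs2 (v p).1)%R%:E else 0%E)
 + intF (fun p => (cabs2 (v p).2)%:E))%E.

Definition measF d1 d2 (v : pairF d1 d2) : Prop :=
  [/\ measurable_fun [set: freq d1 d2] (fun p => complex.Re (v p).1),
      measurable_fun [set: freq d1 d2] (fun p => complex.Im (v p).1),
      measurable_fun [set: freq d1 d2] (fun p => complex.Re (v p).2) &
      measurable_fun [set: freq d1 d2] (fun p => complex.Im (v p).2)].

Definition inX d1 d2 (v : pairF d1 d2) : Prop := measF v /\ (Xnorm2 v < +oo)%E.

Definition inXS d1 d2 (v : pairF d1 d2) : Prop :=
  inX v /\ nullF [set p | enorm p.1 < enorm p.2 /\
                          (v p).1 + (v p).2 / rc (lambda p) != 0].
Definition inXU d1 d2 (v : pairF d1 d2) : Prop :=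
  inX v /\ nullF [set p | enorm p.1 < enorm p.2 /\
                          (v p).1 - (v p).2 / rc (lambda p) != 0].
Definition inXC d1 d2 (v : pairF d1 d2) : Prop :=
  inX v /\ nullF [set p | enorm p.1 < enorm p.2 /\ v p != (0, 0)].

End Defs.

From HB Require Import structures.
From mathcomp Require Import all_boot all_order all_algebra.
From mathcomp Require Import all_classical all_reals all_analysis.
From mathcomp Require Import complex.
From mathcomp Require Import measurable_realfun lebesgue_integral_fubini.
From mathcomp Require Import ring lra.
(* Phi acts fibrewise on the Fourier side, so the X-norm of a solution is the integral of a
   fibrewise energy.  Where |eta'| < |xi| the matrix is a rotation preserving
   omega^2 |a0|^2 + |a1|^2; on the cone |xi| = |eta'| only |a1|^2 counts and a1 is unchanged.
   Where |xi| < |eta'| the conditions defining X^S and X^U say that (a0, a1) is an eigenvector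
   a1 = -lambda a0, resp. a1 = lambda a0, of the hyperbolic matrix, with eigenvalue
   exp(-lambda y1), resp. exp(lambda y1), which is at most 1 for the allowed sign of y1; on X^C
   this fibre vanishes.  Linearity of Phi reduces the statements about differences to these
   pointwise facts, and the null exceptional sets do not affect the integrals. *)

Import Order.TTheory GRing.Theory Num.Theory.
Import numFieldNormedType.Exports.
Set Implicit Arguments. Unset Strict Implicit. Unset Printing Implicit Defensive.
Local Open Scope ring_scope.
Local Open Scope classical_set_scope.

Section Complex.
Variable R : realType.
Implicit Types (z : R[i]) (c : R).

Lemma Re_rcM c z : complex.Re (rc c * z) = c * complex.Re z.
Proof. by case: z => a b /=; rewrite mul0r subr0. Qed.

Lemma Im_rcM c z : complex.Im (rc c * z) = c * complex.Im z.
Proof. by case: z => a b /=; rewrite mul0r addr0. Qed.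

Lemma ReD z1 z2 : complex.Re (z1 + z2) = complex.Re z1 + complex.Re z2.
Proof. by case: z1; case: z2. Qed.

Lemma ImD z1 z2 : complex.Im (z1 + z2) = complex.Im z1 + complex.Im z2.
Proof. by case: z1; case: z2. Qed.

Lemma ReB z1 z2 : complex.Re (z1 - z2) = complex.Re z1 - complex.Re z2.
Proof. by case: z1; case: z2. Qed.

Lemma ImB z1 z2 : complex.Im (z1 - z2) = complex.Im z1 - complex.Im z2.
Proof. by case: z1; case: z2. Qed.

Lemma divr_rc z c : z / rc c = rc c^-1 * z.
Proof. by rewrite /rc fmorphV mulrC. Qed.

Lemma neq0_ReIm z : z != 0 <-> complex.Re z != 0 \/ complex.Im z != 0.
Proof.
case: z => a b /=; split; last by case=> H; apply: contra_neq H => -[].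
by rewrite eq_complex negb_and => /orP.
Qed.

Lemma cabs2_ge0 z : 0 <= cabs2 z.
Proof. by rewrite addr_ge0 // sqr_ge0. Qed.

Lemma cabs2_rcM c z : cabs2 (rc c * z) = c ^+ 2 * cabs2 z.
Proof. by rewrite /cabs2 Re_rcM Im_rcM; ring. Qed.

Lemma cabs2_rc_lin c c' z z' : cabs2 (rc c * z + rc c' * z') =
  (c * complex.Re z + c' * complex.Re z') ^+ 2 + (c * complex.Im z + c' * complex.Im z') ^+ 2.
Proof. by rewrite /cabs2 ReD ImD !Re_rcM !Im_rcM. Qed.
End Complex.

Section Pointwise.
Variables (R : realType) (d1 d2 : nat).
Local Notation F := (freq R d1 d2).
Implicit Types (p : F) (u v w : pairF R d1 d2) (y : R).

Definition energy p (a : R[i] * R[i]) : R :=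
  (if enorm p.2 < enorm p.1 then omega p ^+ 2 * cabs2 a.1 else 0) +
  (if enorm p.1 <= enorm p.2 then lambda p ^+ 2 * cabs2 a.1 else 0) + cabs2 a.2.

Lemma energy_ge0 p a : 0 <= energy p a.
Proof.
rewrite /energy; apply: addr_ge0; last exact: cabs2_ge0.
by apply: addr_ge0; case: ifP => _; rewrite // mulr_ge0 ?sqr_ge0 ?cabs2_ge0.
Qed.

Lemma energy_scale p c a : energy p (rc c * a.1, rc c * a.2) = c ^+ 2 * energy p a.
Proof. by rewrite /energy /= !cabs2_rcM; case: ifP; case: ifP => _ _; ring. Qed.

Lemma Phi_subF y u v : subF (Phi y u) (Phi y v) = Phi y (subF u v).
Proof. by apply/funext => p; rewrite /subF /Phi; case: ifP => _ /=; congr pair; ring. Qed.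

Lemma enorm_ge0 n (v : n.-tuple R) : 0 <= enorm v.
Proof. exact: sqrtr_ge0. Qed.

Lemma energy_Phi_oscillatory y w p : enorm p.2 < enorm p.1 ->
  energy p (Phi y w p) = energy p (w p).
Proof.
move=> h; have e2 := enorm_ge0 p.2.
have om0 : omega p != 0 by rewrite gt_eqF // sqrtr_gt0; nra.
rewrite /energy /Phi (ltW h) h leNgt h /= /sin_over (negbTE om0).
rewrite -[RHS]mul1r -(cos2Dsin2 (omega p * y)) !cabs2_rc_lin /cabs2.
by field.
Qed.

Lemma energy_Phi_characteristic y w p : enorm p.1 = enorm p.2 ->
  energy p (Phi y w p) = energy p (w p).
Proof.
move=> h; have om : omega p = 0 by rewrite /omega h subrr sqrtr0.
have la : lambda p = 0 by rewrite /lambda h subrr sqrtr0.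
rewrite /energy /Phi h lexx ltxx /= om la /sin_over eqxx mul0r cos0 !cabs2_rc_lin /cabs2.
ring.
Qed.

Lemma lambda_gt0 p : enorm p.1 < enorm p.2 -> 0 < lambda p.
Proof. by move=> h; have := enorm_ge0 p.1; rewrite sqrtr_gt0; nra. Qed.

Lemma cosh_add_sign_sinh (s x : R) : s ^+ 2 = 1 -> cosh x + s * sinh x = expR (s * x).
Proof.
move/eqP; rewrite sqrf_eq1 => /orP[/eqP -> | /eqP ->]; rewrite /cosh /sinh.
  by rewrite !mul1r; field.
by rewrite !mulN1r; field.
Qed.

Lemma Phi_hyperbolic y w p (s : R) : enorm p.1 < enorm p.2 -> s ^+ 2 = 1 ->
  (w p).2 = rc (s * lambda p) * (w p).1 ->
  Phi y w p = (rc (expR (s * lambda p * y)) * (w p).1, rc (expR (s * lambda p * y)) * (w p).2).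
Proof.
move=> h s2 a1E; have l0 : lambda p != 0 by rewrite gt_eqF ?lambda_gt0.
rewrite /Phi leNgt h /= /sinh_over (negbTE l0) a1E -mulrA -cosh_add_sign_sinh // /rc.
set L := lambda p in l0 *; set C := cosh (L * y); set S := sinh (L * y); clearbody L C S.
have e1 : C + S / L * (s * L) = C + s * S by field.
have e2 : L * S + C * (s * L) = (C + s * S) * (s * L).
  apply/eqP; rewrite -subr_eq0; apply/eqP.
  by transitivity (L * S * (1 - s ^+ 2)); [ring | rewrite s2 subrr mulr0].
by congr pair; rewrite !mulrA -!rmorphM -mulrDl -rmorphD ?e1 ?e2.
Qed.

Lemma energy_Phi_hyperbolic_le y w p (s : R) : enorm p.1 < enorm p.2 -> s ^+ 2 = 1 ->
  s * y <= 0 -> (w p).2 = rc (s * lambda p) * (w p).1 ->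
  energy p (Phi y w p) <= energy p (w p).
Proof.
move=> h s2 sy a1E; rewrite (Phi_hyperbolic _ h s2 a1E) energy_scale ler_piMl ?energy_ge0 //.
rewrite exprn_ile1 ?expR_ge0 // expR_le1 mulrAC.
by rewrite mulr_le0_ge0 // ltW ?lambda_gt0.
Qed.

Lemma stable_mode (l : R) (z0 z1 : R[i]) : l != 0 -> z0 + z1 / rc l = 0 ->
  z1 = rc (-1 * l) * z0.
Proof.
move=> l0 /eqP; rewrite addr_eq0 => /eqP ->.
by rewrite /rc mulN1r rmorphN mulrN mulNr opprK mulrC divfK // fmorph_eq0.
Qed.

Lemma unstable_mode (l : R) (z0 z1 : R[i]) : l != 0 -> z0 - z1 / rc l = 0 ->
  z1 = rc (1 * l) * z0.
Proof.
by move=> l0 /eqP; rewrite subr_eq0 => /eqP ->; rewrite /rc mul1r mulrC divfK // fmorph_eq0.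
Qed.

Lemma energy_Phi_stable y w p : 0 <= y ->
  (enorm p.1 < enorm p.2 -> (w p).1 + (w p).2 / rc (lambda p) = 0) ->
  energy p (Phi y w p) <= energy p (w p).
Proof.
move=> y0 hS; case: (ltgtP (enorm p.1) (enorm p.2)) => h.
- apply: (energy_Phi_hyperbolic_le (s := -1)) => //; first by rewrite sqrrN expr1n.
    by rewrite mulN1r oppr_le0.
  by apply: stable_mode (hS h); rewrite gt_eqF ?lambda_gt0.
- by rewrite energy_Phi_oscillatory.
- by rewrite energy_Phi_characteristic.
Qed.

Lemma energy_Phi_unstable y w p : y <= 0 ->
  (enorm p.1 < enorm p.2 -> (w p).1 - (w p).2 / rc (lambda p) = 0) ->
  energy p (Phi y w p) <= energy p (w p).
Proof.
move=> y0 hU; case: (ltgtP (enorm p.1) (enorm p.2)) => h.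
- apply: (energy_Phi_hyperbolic_le (s := 1)) => //; first by rewrite expr1n.
    by rewrite mul1r.
  by apply: unstable_mode (hU h); rewrite gt_eqF ?lambda_gt0.
- by rewrite energy_Phi_oscillatory.
- by rewrite energy_Phi_characteristic.
Qed.

Lemma energy_Phi_off_hyperbolic y w p : (enorm p.1 < enorm p.2 -> w p = (0, 0)) ->
  energy p (Phi y w p) = energy p (w p).
Proof.
move=> hC; case: (ltgtP (enorm p.1) (enorm p.2)) => h.
- have w0 := hC h; have Phi0 : Phi y w p = (0, 0).
    by rewrite /Phi w0 /=; case: ifP => _; rewrite !mulr0 !addr0.
  by rewrite Phi0 w0.
- by rewrite energy_Phi_oscillatory.
- by rewrite energy_Phi_characteristic.
Qed.
End Pointwise.

Section IteratedIntegral.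
Variable R : realType.
Local Open Scope ereal_scope.

Lemma intRn_ge0 n (f : n.-tuple R -> \bar R) : (forall v, 0 <= f v) -> 0 <= intRn f.
Proof.
elim: n f => [|n IH] f f0 /=; first exact: f0.
by apply: integral_ge0 => t _; apply: IH.
Qed.

(* [measurableTypeR R] and the entries of tuples carry the same sigma-algebra on [R],
   but not syntactically. *)
Lemma measurable_measurableTypeR_id :
  measurable_fun [set: measurableTypeR R] (fun x : measurableTypeR R => x : R).
Proof. by move=> _ A mA; rewrite setTI. Qed.

Lemma measurable_intRn_param n d (X : measurableType d) (f : X * n.-tuple R -> \bar R) :
  measurable_fun setT f -> (forall z, 0 <= f z) ->
  measurable_fun setT (fun x => intRn (fun v => f (x, v))).
Proof.
elim: n d X f => [|n IH] d X f mf f0 /=; first exact: measurable_fun_pair1.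
pose g (z : (X * measurableTypeR R) * n.-tuple R) := f (z.1.1, [tuple of z.1.2 :: z.2]).
have mg : measurable_fun setT g.
  apply: (measurableT_comp mf); apply: measurable_fun_pair.
    exact: measurableT_comp.
  by apply: measurable_cons => //; apply: measurableT_comp.
have := measurable_fun_fubini_tonelli_F (m2 := lebesgue_measure) _
  (IH _ _ g mg (fun z => f0 _)) (fun z => intRn_ge0 (fun v => f0 _)).
by rewrite /fubini_F.
Qed.

Lemma measurable_intRn_cons n (f : n.+1.-tuple R -> \bar R) :
  measurable_fun setT f -> (forall v, 0 <= f v) ->
  measurable_fun [set: measurableTypeR R] (fun t => intRn (fun v => f [tuple of t :: v])).
Proof.
move=> mf f0; pose g (z : measurableTypeR R * n.-tuple R) := f [tuple of z.1 :: z.2].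
apply: (@measurable_intRn_param _ _ _ g); last by move=> z; apply: f0.
apply: (measurableT_comp mf); apply: measurable_cons; last exact: measurable_snd.
exact: (measurableT_comp measurable_measurableTypeR_id measurable_fst).
Qed.

Lemma intRnD n (f g : n.-tuple R -> \bar R) :
  measurable_fun setT f -> measurable_fun setT g ->
  (forall v, 0 <= f v) -> (forall v, 0 <= g v) ->
  intRn (fun v => f v + g v) = intRn f + intRn g.
Proof.
elim: n f g => [|n IH] f g mf mg f0 g0 //=.
rewrite -ge0_integralD //; last 4 first.
- by move=> t _; apply: intRn_ge0.
- exact: measurable_intRn_cons.
- by move=> t _; apply: intRn_ge0.
- exact: measurable_intRn_cons.
apply: eq_integral => t _.
by apply: IH => //; apply: (measurableT_comp _ (measurable_cons _ _)).
Qed.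

Lemma le_intRn n (f g : n.-tuple R -> \bar R) :
  measurable_fun setT f -> measurable_fun setT g ->
  (forall v, 0 <= f v) -> (forall v, f v <= g v) -> intRn f <= intRn g.
Proof.
elim: n f g => [|n IH] f g mf mg f0 fg //=.
apply: ge0_le_integral => //.
- by move=> t _; apply: intRn_ge0.
- exact: measurable_intRn_cons.
- by apply: measurable_intRn_cons => // v; apply: le_trans (f0 v) (fg v).
- by move=> t _; apply: IH => //; apply: (measurableT_comp _ (measurable_cons _ _)).
Qed.

Lemma intRn_eq0_zeros n (h g : n.-tuple R -> \bar R) :
  measurable_fun setT h -> measurable_fun setT g ->
  (forall v, 0 <= h v) -> (forall v, 0 <= g v) ->
  (forall v, h v = 0 -> g v = 0) -> intRn h = 0 -> intRn g = 0.
Proof.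
elim: n h g => [|n IH] h g mh mg h0 g0 hg //=; first exact: hg.
move=> Ih0.
have ae_h0 : ae_eq lebesgue_measure setT
    (fun t : measurableTypeR R => intRn (fun v => h [tuple of t :: v])) (cst 0).
  apply/ae_eq_integral_abs => //; first exact: measurable_intRn_cons.
  rewrite -[RHS]Ih0; apply: eq_integral => t _.
  by rewrite gee0_abs //; apply: intRn_ge0.
rewrite (ae_eq_integral (cst 0)) ?integral0 //.
- exact: measurable_intRn_cons.
- apply: filterS ae_h0 => t ht _.
  apply: IH (ht I) => //; last by move=> v /hg.
  + exact: (measurableT_comp _ (measurable_cons _ _)).
  + exact: (measurableT_comp _ (measurable_cons _ _)).
Qed.
End IteratedIntegral.

Section MeasurableRealFunction.
Context d (T : measurableType d) (R : realType).
Local Notation mT f := (measurable_fun [set: T] f).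
Implicit Types f : T -> R.

Lemma measurable_funV f : mT f -> mT (fun x => (f x)^-1).
Proof.
move=> mf; apply: (measurableT_comp _ mf).
rewrite -(setUv [set (0 : R)]); apply/measurable_funU => //; first exact: measurableC.
split; first exact: measurable_fun_set1.
apply: open_continuous_measurable_fun.
  by rewrite openC; apply: (accessible_closed_set1 (hausdorff_accessible (@Rhausdorff R))).
by move=> x; rewrite inE /= => /eqP x0; apply: inv_continuous.
Qed.

Lemma measurableT_comp_continuous (g : R -> R) f : continuous g -> mT f -> mT (fun x => g (f x)).
Proof. by move=> cg; apply: measurableT_comp (continuous_measurable_fun cg). Qed.

Lemma measurable_sinh f : mT f -> mT (fun x => sinh (f x)).
Proof.
move=> mf; apply: measurable_funM => //; apply: measurable_funB;
  apply: measurableT_comp_continuous => //; try exact: continuous_expR.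
exact: measurable_funN.
Qed.

Lemma measurable_cosh f : mT f -> mT (fun x => cosh (f x)).
Proof.
move=> mf; apply: measurable_funM => //; apply: measurable_funD;
  apply: measurableT_comp_continuous => //; try exact: continuous_expR.
exact: measurable_funN.
Qed.

Lemma measurable_sin_over f y : mT f -> mT (fun x => sin_over (f x) y).
Proof.
move=> mf; apply: measurable_fun_ifT => //; first exact: measurable_fun_eqr.
apply: measurable_funM; last exact: measurable_funV.
by apply: measurableT_comp_continuous; [apply: continuous_sin | apply: measurable_funM].
Qed.

Lemma measurable_sinh_over f y : mT f -> mT (fun x => sinh_over (f x) y).
Proof.
move=> mf; apply: measurable_fun_ifT => //; first exact: measurable_fun_eqr.
apply: measurable_funM; last exact: measurable_funV.
by apply: measurable_sinh; apply: measurable_funM.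
Qed.

Lemma measurable_set_bool (b : T -> bool) : mT b -> measurable [set x | b x].
Proof.
move=> mb; have := mb measurableT [set true] I; rewrite setTI.
by congr measurable; apply/seteqP; split => x /=.
Qed.
End MeasurableRealFunction.

Section FrequencySpace.
Variables (R : realType) (d1 d2 : nat).
Local Notation F := (freq R d1 d2).
Local Notation mF f := (measurable_fun [set: F] f).
Implicit Types (u v w : pairF R d1 d2) (y : R).

Section NonnegativeIntegral.
Local Open Scope ereal_scope.
Implicit Types (f g h : F -> \bar R) (A B : set F).

Lemma measurable_intF_inner f : mF f -> (forall p, 0 <= f p) ->
  measurable_fun setT (fun xi : d1.-tuple R => intRn (fun eta => f (xi, eta))).
Proof. exact: measurable_intRn_param. Qed.

Lemma intF_ge0 f : (forall p, 0 <= f p) -> 0 <= intF f.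
Proof. by move=> f0; apply: intRn_ge0 => xi; apply: intRn_ge0. Qed.

Lemma intFD f g : mF f -> mF g -> (forall p, 0 <= f p) -> (forall p, 0 <= g p) ->
  intF (fun p => f p + g p) = intF f + intF g.
Proof.
move=> mf mg f0 g0; rewrite /intF -intRnD; last 4 first.
- exact: measurable_intF_inner.
- exact: measurable_intF_inner.
- by move=> xi; apply: intRn_ge0.
- by move=> xi; apply: intRn_ge0.
congr intRn; apply/funext => xi.
by apply: intRnD => //; apply: measurable_fun_pair2.
Qed.

Lemma le_intF f g : mF f -> mF g -> (forall p, 0 <= f p) -> (forall p, f p <= g p) ->
  intF f <= intF g.
Proof.
move=> mf mg f0 fg; apply: le_intRn.
- exact: measurable_intF_inner.
- by apply: measurable_intF_inner => // p; apply: le_trans (f0 p) (fg p).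
- by move=> xi; apply: intRn_ge0.
- by move=> xi; apply: le_intRn => //; apply: measurable_fun_pair2.
Qed.

Lemma intF_eq0_zeros h g : mF h -> mF g -> (forall p, 0 <= h p) -> (forall p, 0 <= g p) ->
  (forall p, h p = 0 -> g p = 0) -> intF h = 0 -> intF g = 0.
Proof.
move=> mh mg h0 g0 hg; apply: intRn_eq0_zeros.
- exact: measurable_intF_inner.
- exact: measurable_intF_inner.
- by move=> xi; apply: intRn_ge0.
- by move=> xi; apply: intRn_ge0.
move=> xi; apply: intRn_eq0_zeros => //; try exact: measurable_fun_pair2.
by move=> eta; apply: hg.
Qed.

Lemma measurable_indicE A : measurable A -> mF (fun p => (\1_A p : R)%:E).
Proof. by move=> mA; apply/measurable_EFinP; apply: measurable_indic. Qed.

Lemma indic_ge0 A p : (0 <= (\1_A p : R))%R.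
Proof. by rewrite indicE; case: (p \in A). Qed.

Lemma nullF_subset A B : measurable A -> measurable B -> A `<=` B -> nullF B -> nullF A.
Proof.
move=> mA mB AB nB; apply/eqP; rewrite eq_le intF_ge0 ?andbT; last first.
  by move=> p; rewrite lee_fin indic_ge0.
rewrite -nB; apply: le_intF; try exact: measurable_indicE.
  by move=> p; rewrite lee_fin indic_ge0.
move=> p; rewrite lee_fin !indicE; case: (boolP (p \in A)) => [/set_mem/AB/mem_set -> //|_].
by case: (p \in B).
Qed.

Lemma nullF_setU A B : measurable A -> measurable B -> nullF A -> nullF B ->
  nullF (A `|` B).
Proof.
move=> mA mB nA nB; apply/eqP; rewrite eq_le intF_ge0 ?andbT; last first.
  by move=> p; rewrite lee_fin indic_ge0.
have ind0 (C : set F) (p : F) : 0 <= (\1_C p : R)%:E by rewrite lee_fin indic_ge0.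
rewrite -[0]adde0 -{1}nA -nB -intFD //; try exact: measurable_indicE.
apply: le_intF => //.
- by apply: measurable_indicE; apply: measurableU.
- by apply: emeasurable_funD; apply: measurable_indicE.
move=> p; rewrite -EFinD lee_fin !indicE in_setU.
by case: (p \in A); case: (p \in B) => /=; lra.
Qed.

Lemma le_intF_off_null (f g : F -> R) A :
  mF f -> mF g -> (forall p, 0 <= f p)%R -> (forall p, 0 <= g p)%R ->
  measurable A -> nullF A -> (forall p, ~ A p -> f p <= g p)%R ->
  intF (fun p => (f p)%:E) <= intF (fun p => (g p)%:E).
Proof.
move=> mf mg f0 g0 mA nA fg.
pose fA p := (\1_A p * f p)%R.
have mfA : measurable_fun [set: F] fA by apply: measurable_funM => //; apply: measurable_indic.
have fA0 p : (0 <= fA p)%R by rewrite mulr_ge0 ?indic_ge0.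
have intF_fA : intF (fun p => (fA p)%:E) = 0.
  apply: (intF_eq0_zeros (measurable_indicE mA) _ _ _ _ nA).
  - exact/measurable_EFinP.
  - by move=> p; rewrite lee_fin indic_ge0.
  - by move=> p; rewrite lee_fin fA0.
  - by move=> p [fp0]; rewrite /fA fp0 mul0r.
apply: (@le_trans _ _ (intF (fun p => (g p)%:E + (fA p)%:E))).
  apply: le_intF.
  - exact/measurable_EFinP.
  - by apply: emeasurable_funD; apply/measurable_EFinP.
  - by move=> p; rewrite lee_fin f0.
  move=> p; rewrite -EFinD lee_fin /fA indicE.
  have [Ap|nAp] := pselect (A p); first by rewrite mem_set // mul1r lerDr.
  by rewrite memNset // mul0r addr0; apply: fg.
rewrite intFD ?intF_fA ?adde0 //; try exact/measurable_EFinP.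
Qed.
End NonnegativeIntegral.

Let measurable_sqnorm n :
  measurable_fun [set: n.-tuple R] (fun t : n.-tuple R => \sum_(i < n) tnth t i ^+ 2).
Proof. by apply: measurable_sum => i; apply: measurable_funX; apply: measurable_tnth. Qed.

Lemma measurable_enorm1 : mF (fun p => enorm p.1).
Proof.
apply: measurableT_comp_continuous; first exact: sqrt_continuous.
exact: (measurableT_comp (@measurable_sqnorm d1) measurable_fst).
Qed.

Lemma measurable_enorm2 : mF (fun p => enorm p.2).
Proof.
apply: measurableT_comp_continuous; first exact: sqrt_continuous.
exact: (measurableT_comp (@measurable_sqnorm d2.-1) measurable_snd).
Qed.

Lemma measurable_omega : mF (@omega R d1 d2).
Proof.
apply: measurableT_comp_continuous; first exact: sqrt_continuous.
by apply: measurable_funB; apply: measurable_funX;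
  [apply: measurable_enorm1 | apply: measurable_enorm2].
Qed.

Lemma measurable_lambda : mF (@lambda R d1 d2).
Proof.
apply: measurableT_comp_continuous; first exact: sqrt_continuous.
by apply: measurable_funB; apply: measurable_funX;
  [apply: measurable_enorm2 | apply: measurable_enorm1].
Qed.

Lemma measF_rc_lin {a b : F -> R} {z1 z2 : F -> R[i]} :
  mF a -> mF b ->
  mF (fun p => complex.Re (z1 p)) -> mF (fun p => complex.Im (z1 p)) ->
  mF (fun p => complex.Re (z2 p)) -> mF (fun p => complex.Im (z2 p)) ->
  mF (fun p => complex.Re (rc (a p) * z1 p + rc (b p) * z2 p)) /\
  mF (fun p => complex.Im (rc (a p) * z1 p + rc (b p) * z2 p)).
Proof.
move=> ma mb r1 i1 r2 i2; split.
- by under eq_fun do rewrite ReD !Re_rcM; apply: measurable_funD; apply: measurable_funM.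
- by under eq_fun do rewrite ImD !Im_rcM; apply: measurable_funD; apply: measurable_funM.
Qed.

Lemma measF_subF (u v : pairF R d1 d2) : measF u -> measF v -> measF (subF u v).
Proof.
move=> [u1 u2 u3 u4] [v1 v2 v3 v4]; split => /=.
- by under eq_fun do rewrite ReB; apply: measurable_funB.
- by under eq_fun do rewrite ImB; apply: measurable_funB.
- by under eq_fun do rewrite ReB; apply: measurable_funB.
- by under eq_fun do rewrite ImB; apply: measurable_funB.
Qed.

Lemma measF_Phi y (w : pairF R d1 d2) : measF w -> measF (Phi y w).
Proof.
move=> [w1 w2 w3 w4].
have mo := measurable_omega; have ml := measurable_lambda.
have mco : mF (fun p => cos (omega p * y)).
  by apply: measurableT_comp_continuous; [apply: continuous_cos | apply: measurable_funM].
have mso : mF (fun p => - omega p * sin (omega p * y)).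
  apply: measurable_funM; first exact: measurable_funN.
  by apply: measurableT_comp_continuous; [apply: continuous_sin | apply: measurable_funM].
have mch : mF (fun p => cosh (lambda p * y)) by apply: measurable_cosh; apply: measurable_funM.
have msh : mF (fun p => lambda p * sinh (lambda p * y)).
  by apply: measurable_funM => //; apply: measurable_sinh; apply: measurable_funM.
have mle : mF (fun p : F => enorm p.2 <= enorm p.1).
  by apply: measurable_fun_ler; [apply: measurable_enorm2 | apply: measurable_enorm1].
have [re1 im1] := measF_rc_lin mco (measurable_sin_over y mo) w1 w2 w3 w4.
have [re2 im2] := measF_rc_lin mso mco w1 w2 w3 w4.
have [re3 im3] := measF_rc_lin mch (measurable_sinh_over y ml) w1 w2 w3 w4.
have [re4 im4] := measF_rc_lin msh mch w1 w2 w3 w4.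
rewrite /Phi; split.
- under eq_fun do rewrite (fun_if (fun q => complex.Re q.1)) /=.
  exact: measurable_fun_ifT.
- under eq_fun do rewrite (fun_if (fun q => complex.Im q.1)) /=.
  exact: measurable_fun_ifT.
- under eq_fun do rewrite (fun_if (fun q => complex.Re q.2)) /=.
  exact: measurable_fun_ifT.
- under eq_fun do rewrite (fun_if (fun q => complex.Im q.2)) /=.
  exact: measurable_fun_ifT.
Qed.

Definition stable_defect (w : pairF R d1 d2) :=
  [set p | enorm p.1 < enorm p.2 /\ (w p).1 + (w p).2 / rc (lambda p) != 0].
Definition unstable_defect (w : pairF R d1 d2) :=
  [set p | enorm p.1 < enorm p.2 /\ (w p).1 - (w p).2 / rc (lambda p) != 0].
Definition hyperbolic_support (w : pairF R d1 d2) :=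
  [set p | enorm p.1 < enorm p.2 /\ w p != (0, 0)].

Lemma measurable_energy_parts (w : pairF R d1 d2) : measF w ->
  [/\ mF (fun p => if enorm p.2 < enorm p.1 then omega p ^+ 2 * cabs2 (w p).1 else 0),
      mF (fun p => if enorm p.1 <= enorm p.2 then lambda p ^+ 2 * cabs2 (w p).1 else 0)
    & mF (fun p => cabs2 (w p).2)].
Proof.
move=> [w1 w2 w3 w4].
have mc1 : mF (fun p => cabs2 (w p).1) by apply: measurable_funD; apply: measurable_funX.
split; last by apply: measurable_funD; apply: measurable_funX.
- apply: measurable_fun_ifT => //.
  + by apply: measurable_fun_ltr; [apply: measurable_enorm2 | apply: measurable_enorm1].
  + by apply: measurable_funM => //; apply: measurable_funX; apply: measurable_omega.
- apply: measurable_fun_ifT => //.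
  + by apply: measurable_fun_ler; [apply: measurable_enorm1 | apply: measurable_enorm2].
  + by apply: measurable_funM => //; apply: measurable_funX; apply: measurable_lambda.
Qed.

Lemma measurable_energy (w : pairF R d1 d2) : measF w -> mF (fun p => energy p (w p)).
Proof.
by move=> /measurable_energy_parts[m1 m2 m3]; apply: measurable_funD => //; apply: measurable_funD.
Qed.

Lemma Xnorm2E (w : pairF R d1 d2) : measF w ->
  Xnorm2 w = intF (fun p => (energy p (w p))%:E).
Proof.
move=> /measurable_energy_parts[m1 m2 m3].
have ge0_if (b : bool) c z : (0 <= if b then c ^+ 2 * cabs2 z else 0)%R.
  by case: b; rewrite // mulr_ge0 ?sqr_ge0 ?cabs2_ge0.
have EFin_if (b : bool) (x : R) : (if b then x%:E else 0%E) = (if b then x else 0)%:E.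
  by case: b.
rewrite /Xnorm2 /energy; under eq_fun do rewrite EFin_if.
under [X in (_ + intF X + _)%E]eq_fun do rewrite EFin_if.
under [in RHS]eq_fun do rewrite EFinD EFinD.
rewrite intFD ?intFD //; try exact/measurable_EFinP.
- by move=> p; rewrite lee_fin ge0_if.
- by move=> p; rewrite lee_fin ge0_if.
- by apply: emeasurable_funD; apply/measurable_EFinP.
- by move=> p; rewrite adde_ge0 // lee_fin ge0_if.
- by move=> p; rewrite lee_fin cabs2_ge0.
Qed.

Lemma le_Xnorm2_off_null (w w' : pairF R d1 d2) (A : set F) :
  measF w -> measF w' -> measurable A -> nullF A ->
  (forall p, ~ A p -> energy p (w' p) <= energy p (w p)) -> (Xnorm2 w' <= Xnorm2 w)%E.
Proof.
move=> mw mw' mA nA le_w'w; rewrite !Xnorm2E //.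
apply: (le_intF_off_null (measurable_energy mw') (measurable_energy mw) _ _
  mA nA le_w'w); by move=> p; apply: energy_ge0.
Qed.

Lemma measurable_hyperbolic_neq0 (z : F -> R[i]) :
  mF (fun p => complex.Re (z p)) -> mF (fun p => complex.Im (z p)) ->
  measurable [set p | enorm p.1 < enorm p.2 /\ z p != 0].
Proof.
move=> mr mi; have neq0 (f : F -> R) : mF f -> measurable [set p | f p != 0].
  by move=> mf; apply: measurable_set_bool; apply: measurableT_comp; [|apply: measurable_fun_eqr].
rewrite (_ : [set p | _] = [set p | enorm p.1 < enorm p.2] `&`
   ([set p | complex.Re (z p) != 0] `|` [set p | complex.Im (z p) != 0])).
  apply: measurableI; last by apply: measurableU; apply: neq0.
  by apply: measurable_set_bool; apply: measurable_fun_ltr;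
    [apply: measurable_enorm1 | apply: measurable_enorm2].
by apply/seteqP; split => p /= [h1 h2]; split => //; apply/neq0_ReIm.
Qed.

Lemma measurable_stable_defect (w : pairF R d1 d2) : measF w -> measurable (stable_defect w).
Proof.
move=> [w1 w2 w3 w4]; have mlV := measurable_funV measurable_lambda.
apply: measurable_hyperbolic_neq0.
- under eq_fun do rewrite divr_rc ReD Re_rcM.
  by apply: measurable_funD => //; apply: measurable_funM.
- under eq_fun do rewrite divr_rc ImD Im_rcM.
  by apply: measurable_funD => //; apply: measurable_funM.
Qed.

Lemma measurable_unstable_defect (w : pairF R d1 d2) : measF w -> measurable (unstable_defect w).
Proof.
move=> [w1 w2 w3 w4]; have mlV := measurable_funV measurable_lambda.
apply: measurable_hyperbolic_neq0.
- under eq_fun do rewrite divr_rc ReB Re_rcM.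
  by apply: measurable_funB => //; apply: measurable_funM.
- under eq_fun do rewrite divr_rc ImB Im_rcM.
  by apply: measurable_funB => //; apply: measurable_funM.
Qed.

Lemma measurable_hyperbolic_support (w : pairF R d1 d2) : measF w ->
  measurable (hyperbolic_support w).
Proof.
move=> [w1 w2 w3 w4].
rewrite (_ : hyperbolic_support w = [set p | enorm p.1 < enorm p.2 /\ (w p).1 != 0] `|`
   [set p | enorm p.1 < enorm p.2 /\ (w p).2 != 0]).
  by apply: measurableU; apply: measurable_hyperbolic_neq0.
apply/seteqP; split => p; rewrite /hyperbolic_support /=; case: (w p) => a b /=.
  by move=> [h]; rewrite xpair_eqE negb_and => /orP[]; [left | right].
by case=> [] [h H]; split => //; rewrite xpair_eqE negb_and H ?orbT.
Qed.

Lemma eq_of_not_neq (P : Prop) (T : eqType) (x z : T) : ~ (P /\ z != x) -> P -> z = x.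
Proof. by move=> H hP; apply/eqP; apply: contraT => zx; case: (H (conj hP zx)). Qed.

Lemma Xnorm2_Phi_stable u v y : inXS u -> inXS v -> 0 <= y ->
  (Xnorm2 (subF (Phi y u) (Phi y v)) <= Xnorm2 (subF u v))%E.
Proof.
move=> [[mu _] nu] [[mv _] nv] y0; have mw := measF_subF mu mv.
have mA := measurable_stable_defect mu; have mB := measurable_stable_defect mv.
have := le_Xnorm2_off_null mw (measF_Phi y mw) (measurableU _ _ mA mB) (nullF_setU mA mB nu nv).
rewrite Phi_subF; apply=> p /not_orP[pu pv]; apply: energy_Phi_stable => // h.
have sub_defect (a0 a1 b0 b1 c : R[i]) : a0 - b0 + (a1 - b1) * c = a0 + a1 * c - (b0 + b1 * c).
  by ring.
by rewrite /subF /= sub_defect (eq_of_not_neq pu h) (eq_of_not_neq pv h) subrr.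
Qed.

Lemma Xnorm2_Phi_unstable u v y : inXU u -> inXU v -> y <= 0 ->
  (Xnorm2 (subF (Phi y u) (Phi y v)) <= Xnorm2 (subF u v))%E.
Proof.
move=> [[mu _] nu] [[mv _] nv] y0; have mw := measF_subF mu mv.
have mA := measurable_unstable_defect mu; have mB := measurable_unstable_defect mv.
have := le_Xnorm2_off_null mw (measF_Phi y mw) (measurableU _ _ mA mB) (nullF_setU mA mB nu nv).
rewrite Phi_subF; apply=> p /not_orP[pu pv]; apply: energy_Phi_unstable => // h.
have sub_defect (a0 a1 b0 b1 c : R[i]) : a0 - b0 - (a1 - b1) * c = a0 - a1 * c - (b0 - b1 * c).
  by ring.
by rewrite /subF /= sub_defect (eq_of_not_neq pu h) (eq_of_not_neq pv h) subrr.
Qed.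

Lemma inXC_inXS_inXU u : inXC u -> inXS u /\ inXU u.
Proof.
move=> [[mu fin] nu]; have mC := measurable_hyperbolic_support mu.
split; split => //; apply: nullF_subset nu => //.
- exact: measurable_stable_defect.
- by move=> p [h ne]; split => //; apply: contra_neq ne => ->; rewrite mul0r addr0.
- exact: measurable_unstable_defect.
- by move=> p [h ne]; split => //; apply: contra_neq ne => ->; rewrite mul0r subr0.
Qed.

Lemma Xnorm2_Phi_inXC u v y : inXC u -> inXC v ->
  Xnorm2 (subF (Phi y u) (Phi y v)) = Xnorm2 (subF u v).
Proof.
move=> [[mu _] nu] [[mv _] nv]; have mw := measF_subF mu mv; have mw' := measF_Phi y mw.
have mA := measurable_hyperbolic_support mu; have mB := measurable_hyperbolic_support mv.
have mAB := measurableU _ _ mA mB; have nAB := nullF_setU mA mB nu nv.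
have energyE p : ~ (hyperbolic_support u `|` hyperbolic_support v) p ->
    energy p (Phi y (subF u v) p) = energy p (subF u v p).
  move=> /not_orP[pu pv]; apply: energy_Phi_off_hyperbolic => h.
  by rewrite /subF (eq_of_not_neq pu h) (eq_of_not_neq pv h) subrr.
rewrite Phi_subF; apply/eqP; rewrite eq_le.
by rewrite (le_Xnorm2_off_null mw mw' mAB nAB) ?(le_Xnorm2_off_null mw' mw mAB nAB) //
  => p /energyE ->.
Qed.
End FrequencySpace.

Theorem theorem3 (R : realType) (d1 d2 : nat) (hd1 : (1 <= d1)%N) (hd2 : (2 <= d2)%N) :
  (forall u v : pairF R d1 d2, inXS u -> inXS v -> forall y1 : R, 0 <= y1 ->
     (Xnorm2 (subF (Phi y1 u) (Phi y1 v)) <= Xnorm2 (subF u v))%E)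
  /\
  (forall u v : pairF R d1 d2, inXU u -> inXU v -> forall y1 : R, y1 <= 0 ->
     (Xnorm2 (subF (Phi y1 u) (Phi y1 v)) <= Xnorm2 (subF u v))%E)
  /\
  (forall u : pairF R d1 d2, inXC u -> inXS u /\ inXU u)
  /\
  (forall u v : pairF R d1 d2, inXC u -> inXC v -> forall y1 : R,
     Xnorm2 (subF (Phi y1 u) (Phi y1 v)) = Xnorm2 (subF u v)).
Proof.
split; first by move=> u v hu hv y1; apply: Xnorm2_Phi_stable.
split; first by move=> u v hu hv y1; apply: Xnorm2_Phi_unstable.
split; first exact: inXC_inXS_inXU.
by move=> u v hu hv y1; apply: Xnorm2_Phi_inXC.
Qed.
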